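(* Let $K,H$ be finite dimensional Hilbert spaces, $A\in B(K\otimes H)$ self-adjoint, and $y=\sum_{i=1}^k x_i\otimes y_i$ with $x_i\in K$, $y_i\in H$. Let $X=\mathrm{span}(x_1,\dots,x_k)$ and $Y=\mathrm{span}(y_1,\dots,y_k)$. Suppose $(Ay,y)=1$ and $Ay\notin X\otimes Y$. Then there exist a unit product vector $x=u\otimes v$ ($u\in K$, $v\in H$) with $x\perp X\otimes Y$ and $s\in(0,1)$ such that, with $t=(1-s^2)^{1/2}$, $$\big(A(sx+ty),\,sx+ty\big)>1.$$ *)

From HB Require Import structures.
From mathcomp Require Import all_boot all_order all_algebra.
Set Implicit Arguments. Unset Strict Implicit. Unset Printing Implicit Defensive.
Import Order.TTheory GRing.Theory Num.Theory.
Local Open Scope ring_scope.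

(* K = C^m (column vectors), H = C^n, and K (x) H is modelled as the
   m x n matrices, with the elementary tensor u (x) v := u *m v^T,
   i.e. (u (x) v)_{ij} = u_i v_j. *)

Definition tens (C : numClosedFieldType) (m n : nat)
  (u : 'cV[C]_m) (v : 'cV[C]_n) : 'M[C]_(m, n) := u *m v^T.

Definition dotT (C : numClosedFieldType) (m n : nat) (X Y : 'M[C]_(m, n)) : C :=
  \sum_(i < m) \sum_(j < n) X i j * (Y i j)^*.

Definition selfadj (C : numClosedFieldType) (m n : nat)
  (A : 'M[C]_(m, n) -> 'M[C]_(m, n)) : Prop :=
  forall X Y, dotT (A X) Y = dotT X (A Y).

Definition tens_span (C : numClosedFieldType) (m n k : nat)
  (xs : 'I_k -> 'cV[C]_m) (ys : 'I_k -> 'cV[C]_n) : {vspace 'M[C]_(m, n)} :=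
  <<[seq tens (xs i) (ys j) | i <- enum 'I_k, j <- enum 'I_k]>>%VS.

From HB Require Import structures.
From mathcomp Require Import all_boot all_order all_algebra.
From mathcomp Require Import ring.
Set Implicit Arguments. Unset Strict Implicit. Unset Printing Implicit Defensive.
Import Order.TTheory GRing.Theory Num.Theory.
Local Open Scope ring_scope.

(* If A y were orthogonal to every product vector u (x) v orthogonal to
   X (x) Y, it would lie in X (x) Y; so some such product vector, normalised
   and rotated by a phase, is a unit vector x with d := (A y, x) > 0.
   With a := (A x, x) real, the form on s x + t y (s^2 + t^2 = 1) equals
   1 + s (2 t d - s (1 - a)), which exceeds 1 for small s > 0. *)

Section InnerProduct.
Variables (C : numClosedFieldType) (m n : nat).
Implicit Types (X Y Z : 'M[C]_(m, n)).

Lemma dotTDl X Y Z : dotT (X + Y) Z = dotT X Z + dotT Y Z.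
Proof.
rewrite /dotT -big_split; apply: eq_bigr => i _.
by rewrite -big_split; apply: eq_bigr => j _; rewrite !mxE mulrDl.
Qed.

Lemma dotTZl a X Y : dotT (a *: X) Y = a * dotT X Y.
Proof.
rewrite /dotT mulr_sumr; apply: eq_bigr => i _.
by rewrite mulr_sumr; apply: eq_bigr => j _; rewrite !mxE mulrA.
Qed.

Lemma dotTC X Y : dotT Y X = (dotT X Y)^*.
Proof.
rewrite /dotT rmorph_sum; apply: eq_bigr => i _.
by rewrite rmorph_sum; apply: eq_bigr => j _; rewrite rmorphM /= conjCK mulrC.
Qed.

Lemma dotTDr X Y Z : dotT X (Y + Z) = dotT X Y + dotT X Z.
Proof. by rewrite dotTC dotTDl rmorphD /= -!dotTC. Qed.

Lemma dotTZr a X Y : dotT X (a *: Y) = a^* * dotT X Y.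
Proof. by rewrite dotTC dotTZl rmorphM /= -dotTC. Qed.

Lemma dotT0r X : dotT X 0 = 0.
Proof. by rewrite -(scale0r 0) dotTZr rmorph0 mul0r. Qed.

Lemma dotT_sumr I (r : seq I) (F : I -> 'M[C]_(m, n)) X :
  dotT X (\sum_(i <- r) F i) = \sum_(i <- r) dotT X (F i).
Proof. exact: (big_morph (dotT X) (dotTDr X) (dotT0r X)). Qed.

Lemma dotT_gt0 X : X != 0 -> 0 < dotT X X.
Proof.
have entry_ge0 i j : 0 <= X i j * (X i j)^* by exact: mul_conjC_ge0.
have row_ge0 i : 0 <= \sum_j X i j * (X i j)^* by apply: sumr_ge0.
move=> X0; rewrite lt_def sumr_ge0 // andbT; apply: contra X0 => /eqP dotT0.
apply/eqP/matrixP => i j.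
have row0 := psumr_eq0P (fun i _ => row_ge0 i) dotT0 (i := i) isT.
have /eqP := psumr_eq0P (fun j _ => entry_ge0 i j) row0 (i := j) isT.
by rewrite mul_conjC_eq0 mxE => /eqP.
Qed.

Lemma dotT_tensE X (u : 'cV[C]_m) (v : 'cV[C]_n) :
  dotT X (tens u v) = ((map_mx Num.conj u)^T *m X *m map_mx Num.conj v) 0 0.
Proof.
rewrite /dotT mxE exchange_big; apply: eq_bigr => j _.
rewrite !mxE mulr_suml; apply: eq_bigr => i _.
by rewrite /tens !mxE big_ord1 !mxE rmorphM /= mulrCA mulrA.
Qed.

End InnerProduct.

Lemma map_conjK (C : numClosedFieldType) p q (M : 'M[C]_(p, q)) :
  map_mx Num.conj (map_mx Num.conj M) = M.
Proof. by apply/matrixP => i j; rewrite !mxE conjCK. Qed.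

Definition mx_of_cols (R : Type) (m k : nat) (xs : 'I_k -> 'cV[R]_m) : 'M[R]_(m, k) :=
  \matrix_(a, i) xs i a 0.

Lemma col_mx_of_cols (R : Type) (m k : nat) (xs : 'I_k -> 'cV[R]_m) i :
  col i (mx_of_cols xs) = xs i.
Proof. by apply/matrixP => a b; rewrite !mxE ord1. Qed.

Section TensSpan.
Variables (C : numClosedFieldType) (m n k : nat).
Variables (xs : 'I_k -> 'cV[C]_m) (ys : 'I_k -> 'cV[C]_n).
Local Notation X := (mx_of_cols xs).
Local Notation Y := (mx_of_cols ys).

Lemma orth_tens_span (x : 'M[C]_(m, n)) :
  (forall i j, dotT x (tens (xs i) (ys j)) = 0) ->
  forall z, z \in tens_span xs ys -> dotT x z = 0.
Proof.
move=> x_orth z; rewrite /tens_span; set s := [seq _ | _ <- _, _ <- _] => z_s.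
rewrite (@coord_span _ _ _ (in_tuple s) z z_s) dotT_sumr big1 // => i _.
rewrite dotTZr.
have /allpairsP[[a b] [_ _ ->]] : (in_tuple s)`_i \in s by exact: mem_nth.
by rewrite x_orth mulr0.
Qed.

Lemma mul_cols_mem_tens_span (c : 'M[C]_k) : X *m c *m Y^T \in tens_span xs ys.
Proof.
have -> : X *m c *m Y^T = \sum_i \sum_j c i j *: tens (xs i) (ys j).
  apply/matrixP => a b; rewrite !mxE summxE.
  under eq_bigr do rewrite !mxE mulr_suml.
  rewrite exchange_big /=; apply: eq_bigr => i _.
  rewrite summxE; apply: eq_bigr => j _.
  by rewrite !mxE big_ord1 !mxE mulrCA mulrA.
apply: memv_suml => i _; apply: memv_suml => j _; apply: memvZ.
by apply: memv_span; apply: allpairs_f; exact: mem_enum.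
Qed.

Lemma sub_cols_mem_tens_span (w : 'M[C]_(m, n)) :
  (w^T <= X^T)%MS -> (w <= Y^T)%MS -> w \in tens_span xs ys.
Proof.
move=> /mulmxKpV wX /mulmxKpV wY.
have -> : w = X *m ((w^T *m pinvmx X^T)^T *m pinvmx Y^T) *m Y^T.
  have XwT : X *m (w^T *m pinvmx X^T)^T = w.
    by rewrite -[LHS]trmxK trmx_mul trmxK wX trmxK.
  by rewrite [X *m _]mulmxA XwT wY.
exact: mul_cols_mem_tens_span.
Qed.

Lemma tens_orth_left (c : 'cV[C]_m) (v : 'cV[C]_n) : X^T *m c = 0 ->
  forall i j, dotT (tens (map_mx Num.conj c) v) (tens (xs i) (ys j)) = 0.
Proof.
move=> Xc0 i j; rewrite dotTC dotT_tensE map_conjK /tens !mulmxA.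
have -> : c^T *m xs i = 0.
  rewrite -col_mx_of_cols -[_ *m _]trmxK trmx_mul trmxK tr_col -row_mul.
  by rewrite Xc0 row0 trmx0.
by rewrite !mul0mx mxE rmorph0.
Qed.

Lemma tens_orth_right (u : 'cV[C]_m) (c : 'cV[C]_n) : Y^T *m c = 0 ->
  forall i j, dotT (tens u (map_mx Num.conj c)) (tens (xs i) (ys j)) = 0.
Proof.
move=> Yc0 i j; rewrite dotTC dotT_tensE map_conjK /tens -!mulmxA.
have -> : (ys j)^T *m c = 0 by rewrite -col_mx_of_cols tr_col -row_mul Yc0 row0.
by rewrite !mulmx0 mxE rmorph0.
Qed.

Lemma exists_tens_orth_tens_span (w : 'M[C]_(m, n)) : w \notin tens_span xs ys ->
  exists u v, (forall i j, dotT (tens u v) (tens (xs i) (ys j)) = 0) /\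
              dotT w (tens u v) != 0.
Proof.
(* The columns of cokermx X^T are the vectors killed by X^T; if none of them
   detects w then w^T <= X^T, and symmetrically w <= Y^T. *)
move=> w_span.
have [wX | /matrix0Pn[j [i wXji]]] := eqVneq (w^T *m cokermx X^T) 0; last first.
  pose c := col i (cokermx X^T).
  exists (map_mx Num.conj c), (delta_mx j 0); split.
    by apply: tens_orth_left; rewrite /c colE mulmxA mulmx_coker mul0mx.
  rewrite dotT_tensE map_conjK map_delta_mx -colE mxE.
  by rewrite -[c^T *m w]trmxK trmx_mul trmxK mxE /c colE mulmxA -colE mxE.
have [wY | /matrix0Pn[i [j wYij]]] := eqVneq (w *m cokermx Y^T) 0; last first.
  pose c := col j (cokermx Y^T).
  exists (delta_mx i 0), (map_mx Num.conj c); split.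
    by apply: tens_orth_right; rewrite /c colE mulmxA mulmx_coker mul0mx.
  rewrite dotT_tensE map_conjK map_delta_mx trmx_delta -rowE -row_mul mxE.
  by rewrite /c colE mulmxA -colE mxE.
by case/negP: w_span; apply: sub_cols_mem_tens_span; rewrite submxE ?wX ?wY.
Qed.

End TensSpan.

Lemma exists_unit_rescale_dotT_gt0 (C : numClosedFieldType) (m n : nat)
  (w x : 'M[C]_(m, n)) : dotT w x != 0 ->
  exists lam, dotT (lam *: x) (lam *: x) = 1 /\ 0 < dotT w (lam *: x).
Proof.
move=> wx0; set c := dotT w x.
have x0 : x != 0 by apply: contraNneq wx0 => ->; rewrite dotT0r.
set N := dotT x x; have N_gt0 : 0 < N by exact: dotT_gt0.
pose r := `|c| * sqrtC N.
have r_gt0 : 0 < r by rewrite mulr_gt0 ?normr_gt0 ?sqrtC_gt0.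
have [c0 r0] : c != 0 /\ r != 0 by rewrite wx0 gt_eqF.
have cc : c * c^* = `|c| ^+ 2 by rewrite normCK.
exists (c / r); rewrite dotTZl !dotTZr -/c -/N.
rewrite rmorphM fmorphV /= (geC0_conj (ltW r_gt0)).
split.
- have -> : c / r * (c^* / r * N) = (c * c^*) * N / r ^+ 2 by field.
  by rewrite cc /r exprMn sqrtCK divff // mulf_neq0 ?expf_neq0 ?normr_eq0 // gt_eqF.
- have -> : c^* / r * c = (c * c^*) / r by field.
  by rewrite cc divr_gt0 ?exprn_gt0 ?normr_gt0.
Qed.

Lemma selfadj_dotT_comb (C : numClosedFieldType) (m n : nat)
  (A : {linear 'M[C]_(m, n) -> 'M[C]_(m, n)}) (x y : 'M[C]_(m, n)) (s t : C) :
  selfadj A -> s \is Num.real -> t \is Num.real -> dotT (A y) x \is Num.real ->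
  dotT (A (s *: x + t *: y)) (s *: x + t *: y) =
  s ^+ 2 * dotT (A x) x + 2 * s * t * dotT (A y) x + t ^+ 2 * dotT (A y) y.
Proof.
move=> A_sa s_real t_real Ayx_real.
have Axy : dotT (A x) y = dotT (A y) x by rewrite A_sa dotTC conj_Creal.
rewrite linearD !linearZ /= !dotTDl !dotTDr !dotTZl !dotTZr !conj_Creal // Axy.
ring.
Qed.

Lemma exists_circle_point_gt1 (R : numFieldType) (a d : R) :
  a \is Num.real -> 0 < d ->
  exists s t, [/\ 0 < s, s < 1, 0 <= t, s ^+ 2 + t ^+ 2 = 1
                & 1 < s ^+ 2 * a + 2 * s * t * d + t ^+ 2].
Proof.
(* (s, t) = (2 d K, K^2 - d^2) / (K^2 + d^2) lies on the unit circle with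
   2 t d = s (K - d^2 / K), and K = |1 - a| + d + 1 makes this gain beat
   the loss s^2 (1 - a). *)
move=> a_real d_gt0; pose b := 1 - a.
have b_le : b <= `|b| by rewrite real_ler_norm // rpredB ?rpred1.
pose K := `|b| + d + 1; pose D := K ^+ 2 + d ^+ 2.
have K_gt_d : d < K by rewrite /K -addrA addrCA ltrDl ltr_wpDl ?normr_ge0.
have K_gt0 : 0 < K := lt_trans d_gt0 K_gt_d.
have D_gt0 : 0 < D by rewrite addr_gt0 ?exprn_gt0.
have [K0 D0] : K != 0 /\ D != 0 by rewrite !gt_eqF.
pose s := 2 * d * K / D; pose t := (K ^+ 2 - d ^+ 2) / D.
have s_gt0 : 0 < s by rewrite !divr_gt0 ?mulr_gt0.
exists s, t; split => //.
- have -> : s = 1 - (K - d) ^+ 2 / D by rewrite /s /D; field.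
  by rewrite ltrBlDr ltrDl divr_gt0 ?exprn_gt0 ?subr_gt0.
- apply: divr_ge0 (ltW D_gt0).
  by rewrite subr_sqr mulr_ge0 ?subr_ge0 ?addr_ge0
             ?(ltW K_gt_d) ?(ltW d_gt0) ?(ltW K_gt0).
- by rewrite /s /t /D; field.
have -> : s ^+ 2 * a + 2 * s * t * d + t ^+ 2 =
          1 + s ^+ 2 * ((`|b| - b) + 1 + d * (K - d) / K).
  have -> : `|b| = K - d - 1 by rewrite /K; ring.
  by rewrite /s /t /D /b; field; rewrite K0 -/D D0.
rewrite ltrDl mulr_gt0 ?exprn_gt0 // ltr_wpDr ?ltr_wpDl ?subr_ge0 //.
by rewrite divr_ge0 ?mulr_ge0 ?subr_ge0 ?ltW.
Qed.

Theorem lemma5 (C : numClosedFieldType) (m n k : nat)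
  (A : {linear 'M[C]_(m, n) -> 'M[C]_(m, n)})
  (xs : 'I_k -> 'cV[C]_m) (ys : 'I_k -> 'cV[C]_n) (y : 'M[C]_(m, n)) :
  selfadj A ->
  y = \sum_(i < k) tens (xs i) (ys i) ->
  dotT (A y) y = 1 ->
  A y \notin tens_span xs ys ->
  exists (u : 'cV[C]_m) (v : 'cV[C]_n) (s : C),
    let x := tens u v in
    let t := sqrtC (1 - s ^+ 2) in
    [/\ dotT x x = 1,
        (forall z, z \in tens_span xs ys -> dotT x z = 0),
        0 < s, s < 1 &
        1 < dotT (A (s *: x + t *: y)) (s *: x + t *: y)].
Proof.
move=> A_sa _ Ayy Ay_span.
have [u [v [uv_orth Ay_uv]]] := exists_tens_orth_tens_span Ay_span.
have [lam [x_unit d_gt0]] := exists_unit_rescale_dotT_gt0 Ay_uv.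
set x := lam *: tens u v in x_unit d_gt0.
have x_tens : tens (lam *: u) v = x by rewrite /x /tens scalemxAl.
have a_real : dotT (A x) x \is Num.real by rewrite CrealE -dotTC A_sa.
have [s [t [s_gt0 s_lt1 t_ge0 st1 gt1]]] := exists_circle_point_gt1 a_real d_gt0.
have t_def : sqrtC (1 - s ^+ 2) = t by rewrite -st1 addrAC subrr add0r sqrCK.
exists (lam *: u), v, s; rewrite /= x_tens t_def; split => //.
  by apply: orth_tens_span => i j; rewrite dotTZl uv_orth mulr0.
rewrite selfadj_dotT_comb ?(gtr0_real s_gt0) ?(ger0_real t_ge0) //.
  by rewrite Ayy mulr1.
exact: gtr0_real.
Qed.
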